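(* Let $\mu^*\in\mathbb P(S)$ with $\mu^*(x)>0$ for all $x\in S$. Then there exists $\alpha_0\in(\tfrac12,1)$ such that for every $\alpha\in[\alpha_0,1]$ there is a kernel $\bar Q^*$ (i.e. $\bar Q^*(\cdot|x)$ a probability on $D(x)$ for each $x$, equivalently $Q^*=\mu^*\otimes\bar Q^*\in\mathbb P(D)$) with $\mu^*=\mu^*P^{\bar Q^*}$, i.e. $\mu^*$ is a stationary distribution of the transition matrix $P^{\bar Q^*}$.
   Context: $S=\{1,\dots,d\}$ are the nodes of a connected undirected graph with edge set $E$ (no loops), and $D(x):=\{x'\in S:(x,x')\in E\}\cup\{x\}\subset A:=S$; assume $|D(x)|\ge2$ for all $x$. Fix $\alpha\in(0,1]$. For $a\in D(x)$ and $x'\in S$ let $p^{x,a}(x'):=\alpha$ if $x'=a$, $p^{x,a}(x'):=\frac{1-\alpha}{|D(x)|-1}$ if $x'\in D(x)\setminus\{a\}$, and $p^{x,a}(x'):=0$ otherwise (an individual at $x$ choosing $a$ moves to $a$ with probability $\alpha$ and otherwise uniformly to another element of $D(x)$). For a kernel $\bar Q$ with $\bar Q(\cdot|x)$ a probability on $D(x)$, $P^{\bar Q}$ is the $d\times d$ matrix with entries $p^{\bar Q}_{xx'}:=\sum_{a\in D(x)}p^{x,a}(x')\bar Q(a|x)$; $\mu$ is treated as a row vector and $\mu\otimes\bar Q$ denotes the measure $(x,a)\mapsto\mu(x)\bar Q(a|x)$ on $D:=\{(x,a):a\in D(x)\}$. *)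

From HB Require Import structures.
From mathcomp Require Import all_boot all_order all_algebra.
From mathcomp Require Import reals.
Set Implicit Arguments. Unset Strict Implicit. Unset Printing Implicit Defensive.
Import Order.TTheory GRing.Theory Num.Theory.
Local Open Scope ring_scope.

(* S = 'I_d, graph given by an edge relation E : rel 'I_d. *)

Definition simple_connected_graph (d : nat) (E : rel 'I_d) : Prop :=
  [/\ symmetric E, irreflexive E & forall x y : 'I_d, connect E x y].

Definition Dset (d : nat) (E : rel 'I_d) (x : 'I_d) : {set 'I_d} :=
  [set x' | E x x' || (x' == x)].

Definition ptrans (R : realType) (d : nat) (E : rel 'I_d) (alpha : R)
    (x a x' : 'I_d) : R :=
  if x' \in Dset E x then
    (if x' == a then alpha else (1 - alpha) / (#|Dset E x|.-1)%:R)
  else 0.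

Definition is_kernel (R : realType) (d : nat) (E : rel 'I_d)
    (Qbar : 'I_d -> 'I_d -> R) : Prop :=
  forall x : 'I_d,
    (forall a, 0 <= Qbar x a) /\ (forall a, a \notin Dset E x -> Qbar x a = 0)
    /\ \sum_(a in Dset E x) Qbar x a = 1.

Definition Pmat (R : realType) (d : nat) (E : rel 'I_d) (alpha : R)
    (Qbar : 'I_d -> 'I_d -> R) : 'M[R]_d :=
  \matrix_(x, x') \sum_(a in Dset E x) ptrans E alpha x a x' * Qbar x a.

Definition is_prob (R : realType) (d : nat) (mu : 'rV[R]_d) : Prop :=
  (forall x, 0 <= mu 0 x) /\ \sum_x mu 0 x = 1.

From HB Require Import structures.
From mathcomp Require Import all_boot all_order all_algebra.
From mathcomp Require Import reals.
From mathcomp Require Import ring lra.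
Set Implicit Arguments. Unset Strict Implicit. Unset Printing Implicit Defensive.
Import Order.TTheory GRing.Theory Num.Theory.
Local Open Scope ring_scope.

(* We construct a kernel for which mu* satisfies detailed
   balance, mu(x) P(x,y) = mu(y) P(y,x); since P^{Qbar} is stochastic this
   makes mu* stationary.  Write K_x = |D(x)| - 1 for the number of neighbours
   of x and eps = 1 - alpha.  Under any kernel, P(x,y) = b_x + c_x Qbar(y|x)
   for y in D(x), where b_x = eps / K_x is the probability of a uniform
   "mistake" move and c_x = alpha - b_x.  We take the kernel that puts the
   same weight q_x on every neighbour of x (and the rest on x itself) and
   choose q_x so that each edge carries the flow mu(x) (b_x + c_x q_x) = eps
   in both directions; detailed balance then holds by symmetry of the graph.
   The remaining work is quantitative: for alpha close to 1 (eps at most a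
   small multiple of min_x mu(x)) the weights q_x are admissible, i.e.
   0 <= q_x and K_x q_x <= 1. *)

Lemma stationary_of_detailed_balance (R : comPzRingType) (n : nat)
    (P : 'M[R]_n) (mu : 'rV[R]_n) :
  (forall i, \sum_j P i j = 1) ->
  (forall i j, mu 0 i * P i j = mu 0 j * P j i) -> mu = mu *m P.
Proof.
move=> hrow hbal; apply/rowP => j; rewrite mxE.
under eq_bigr => i _ do rewrite hbal.
by rewrite -mulr_sumr hrow mulr1.
Qed.

Lemma positive_lower_bound (R : realDomainType) (T : finType) (f : T -> R) :
  (forall x, 0 < f x) -> exists2 m : R, 0 < m <= 1 & forall x, m <= f x.
Proof.
move=> hf; exists (\big[Num.min/1]_x f x).
  apply/andP; split.
    by elim/big_rec: _ => // i z _ hz; rewrite lt_min hf.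
  by elim/big_rec: _ => // i z _ hz; rewrite ge_min hz orbT.
by move=> x; rewrite (bigD1 x) //= ge_min lexx.
Qed.

Section NeighbourKernel.

Variables (R : realType) (d : nat) (E : rel 'I_d) (alpha : R).
Hypothesis hsym : symmetric E.
Hypothesis hdeg : forall x : 'I_d, (2 <= #|Dset E x|)%N.

Lemma Dset_refl (x : 'I_d) : x \in Dset E x.
Proof. by rewrite inE eqxx orbT. Qed.

Lemma Dset_sym (x y : 'I_d) : (y \in Dset E x) = (x \in Dset E y).
Proof. by rewrite !inE hsym eq_sym. Qed.

Definition nnbr (x : 'I_d) : R := (#|Dset E x|.-1)%:R.

Lemma nnbr_ge1 (x : 'I_d) : 1 <= nnbr x.
Proof. by rewrite ler1n; have := hdeg x; case: #|Dset E x| => [|[|n]]. Qed.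

Lemma nnbr_le (x : 'I_d) : nnbr x <= d%:R.
Proof.
rewrite ler_nat; apply: leq_trans (leq_pred _) _.
by have := max_card (mem (Dset E x)); rewrite card_ord.
Qed.

Definition jump (x : 'I_d) : R := (1 - alpha) / nnbr x.

Definition stay (x : 'I_d) : R := alpha - jump x.

Lemma jump_nnbr (x : 'I_d) : jump x * nnbr x = 1 - alpha.
Proof. by rewrite /jump mulfVK //; have := nnbr_ge1 x; lra. Qed.

Lemma Pmat_entry (Q : 'I_d -> 'I_d -> R) (x y : 'I_d) :
  \sum_(a in Dset E x) Q x a = 1 ->
  Pmat E alpha Q x y =
  if y \in Dset E x then jump x + stay x * Q x y else 0.
Proof.
move=> hQ; rewrite mxE; case: ifP => hy; last first.
  by apply: big1 => a _; rewrite /ptrans hy mul0r.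
transitivity (\sum_(a in Dset E x)
   (jump x * Q x a + stay x * (if a == y then Q x a else 0))).
  apply: eq_bigr => a _; rewrite /ptrans hy /stay /jump eq_sym.
  by case: eqP => _; ring.
rewrite big_split /= -!mulr_sumr hQ mulr1.
by rewrite (bigD1 y) //= eqxx big1 ?addr0 // => a /andP[_ /negbTE ->].
Qed.

Lemma Pmat_row_sum (Q : 'I_d -> 'I_d -> R) (x : 'I_d) :
  \sum_(a in Dset E x) Q x a = 1 -> \sum_y Pmat E alpha Q x y = 1.
Proof.
move=> hQ; under eq_bigr => y _ do rewrite Pmat_entry //.
rewrite -big_mkcond /= big_split /= sumr_const -mulr_sumr hQ mulr1.
have -> : #|[pred y | y \in Dset E x]| = (#|Dset E x|.-1).+1.
  by rewrite prednK ?(leq_trans _ (hdeg x)) //; apply: eq_card.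
by rewrite -mulr_natr -addn1 natrD /stay -/(nnbr x) mulrDr mulr1 jump_nnbr; ring.
Qed.

Definition nbr_kernel (q : 'I_d -> R) (x a : 'I_d) : R :=
  if a \in Dset E x then (if a == x then 1 - nnbr x * q x else q x) else 0.

Lemma nbr_kernel_sum (q : 'I_d -> R) (x : 'I_d) :
  \sum_(a in Dset E x) nbr_kernel q x a = 1.
Proof.
rewrite (bigD1 x) ?Dset_refl //= /nbr_kernel Dset_refl eqxx.
rewrite (eq_bigr (fun=> q x)) => [|a /andP[-> /negbTE ->] //].
rewrite sumr_const.
have -> : #|[pred a in Dset E x | a != x]| = (#|Dset E x|.-1)%N.
  by rewrite (cardD1 x (Dset E x)) Dset_refl; apply: eq_card => a; rewrite !inE andbC.
by rewrite -mulr_natr -/(nnbr x); ring.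
Qed.

Lemma nbr_kernel_is_kernel (q : 'I_d -> R) :
  (forall x, 0 <= q x /\ nnbr x * q x <= 1) -> is_kernel E (nbr_kernel q).
Proof.
move=> hq x; have [hq0 hq1] := hq x.
split; last split; last exact: nbr_kernel_sum.
- by move=> a; rewrite /nbr_kernel; case: ifP => // _; case: ifP; lra.
- by move=> a /negbTE ha; rewrite /nbr_kernel ha.
Qed.

Lemma nbr_kernel_balance (mu : 'rV[R]_d) (q : 'I_d -> R) (eps : R) :
  (forall x, mu 0 x * (jump x + stay x * q x) = eps) ->
  forall x y, mu 0 x * Pmat E alpha (nbr_kernel q) x y =
              mu 0 y * Pmat E alpha (nbr_kernel q) y x.
Proof.
move=> hflow x y; have [<- // | hxy] := eqVneq x y.
rewrite !Pmat_entry ?nbr_kernel_sum // -(Dset_sym x y).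
case: ifP => hyx; last by rewrite !mulr0.
rewrite /nbr_kernel hyx -Dset_sym hyx (negbTE hxy) eq_sym (negbTE hxy).
by rewrite !hflow.
Qed.

(* The weight q_x solving the flow equation mu(x) (b_x + c_x q_x) = 1 - alpha. *)
Definition flow_weight (mu : 'rV[R]_d) (x : 'I_d) : R :=
  (1 - alpha - mu 0 x * jump x) / (mu 0 x * stay x).

Lemma flow_weight_flow (mu : 'rV[R]_d) (x : 'I_d) : mu 0 x * stay x != 0 ->
  mu 0 x * (jump x + stay x * flow_weight mu x) = 1 - alpha.
Proof.
move=> hmc; rewrite /flow_weight.
set r := 1 - alpha - mu 0 x * jump x.
transitivity (mu 0 x * jump x + r / (mu 0 x * stay x) * (mu 0 x * stay x)).
  by ring.
by rewrite mulfVK // /r; ring.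
Qed.

(* For alpha close enough to 1 relative to mu(x), the weight is admissible:
   then c_x >= 1/2, and K_x q_x <= 1 amounts to K_x (1 - alpha) <= mu(x) c_x. *)
Lemma flow_weight_admissible (mu : 'rV[R]_d) (x : 'I_d) :
  0 < mu 0 x <= 1 -> 0 <= 1 - alpha <= 1/4 ->
  nnbr x * (1 - alpha) <= mu 0 x / 2 ->
  [/\ mu 0 x * stay x != 0, 0 <= flow_weight mu x
    & nnbr x * flow_weight mu x <= 1].
Proof.
move=> /andP[hm0 hm1] /andP[he0 he1] hKe.
have hK := nnbr_ge1 x; have hbK := jump_nnbr x.
have [hb0 hb1] : 0 <= jump x /\ jump x <= 1 - alpha by split; nra.
have hc : 1/2 <= stay x by rewrite /stay; lra.
have hmc : 0 < mu 0 x * stay x by apply: mulr_gt0 => //; lra.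
split; first by rewrite gt_eqF.
  by rewrite /flow_weight divr_ge0 // ?(ltW hmc) //; nra.
rewrite /flow_weight mulrA ler_pdivrMr // mul1r.
have : mu 0 x / 2 <= mu 0 x * stay x by nra.
have : 0 <= nnbr x * (mu 0 x * jump x).
  by apply: mulr_ge0; [lra | exact: mulr_ge0 (ltW hm0) hb0].
lra.
Qed.

End NeighbourKernel.

Arguments nnbr {R d} E x.
Arguments nnbr_ge1 {R d E} hdeg x.
Arguments nnbr_le {R d} E x.

Theorem mainTheorem13 (R : realType) (d : nat) (E : rel 'I_d)
  (hE : simple_connected_graph E)
  (hD : forall x : 'I_d, (2 <= #|Dset E x|)%N)
  (mu : 'rV[R]_d) (hmu : is_prob mu) (hpos : forall x, 0 < mu 0 x) :
  exists alpha0 : R, 1/2 < alpha0 < 1 /\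
    forall alpha : R, alpha0 <= alpha <= 1 ->
      exists Qbar : 'I_d -> 'I_d -> R,
        is_kernel E Qbar /\ mu = mu *m Pmat E alpha Qbar.
Proof.
have [hsym _ _] := hE; have [hmu0 hsum] := hmu.
have hle1 x : mu 0 x <= 1 by rewrite -hsum (bigD1 x) //= lerDl sumr_ge0.
have [m /andP[hm0 hm1] hm] := positive_lower_bound hpos.
have hd : 0 <= d%:R :> R by rewrite ler0n.
(* eps = 1 - alpha <= delta guarantees K_x eps <= mu(x)/4 for every x. *)
pose delta := m / (4 * (d%:R + 1)).
have hdelta : (d%:R + 1) * delta = m / 4 by rewrite /delta; field; lra.
have hdelta0 : 0 < delta by rewrite /delta divr_gt0 //; lra.
exists (1 - delta); split; first by apply/andP; split; nra.
move=> alpha /andP[ha0 ha1].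
pose q := flow_weight E alpha mu.
have hok x : [/\ mu 0 x * stay E alpha x != 0, 0 <= q x & nnbr E x * q x <= 1].
  apply: (flow_weight_admissible hD); first by rewrite hpos hle1.
    by apply/andP; split; nra.
  have hK : nnbr E x <= d%:R :> R := nnbr_le E x.
  have hK1 : 1 <= nnbr E x :> R := nnbr_ge1 hD x.
  have : nnbr E x * (1 - alpha) <= (d%:R + 1) * delta by apply: ler_pM; lra.
  by have := hm x; lra.
exists (nbr_kernel E q); split.
  by apply: nbr_kernel_is_kernel => x; have [] := hok x.
apply: stationary_of_detailed_balance => [x|].
  exact/Pmat_row_sum/nbr_kernel_sum.
apply: (nbr_kernel_balance hsym (eps := 1 - alpha)) => x.
by apply: flow_weight_flow; have [] := hok x.
Qed.
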